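(* Consider the algebra of Laurent polynomials in nonzero variables $a,b,c,d,e,f,h$ with coefficients polynomial in a central parameter $G_1$, with the log-canonical Poisson bracket determined by $\{a,b\}=0,\ \{a,c\}=-\tfrac12 ac,\ \{a,d\}=-\tfrac12 ad,\ \{a,e\}=0,\ \{a,f\}=\tfrac12 af,\ \{a,h\}=\tfrac12 ah,$ $\{b,c\}=\tfrac14 bc,\ \{b,d\}=0,\ \{b,e\}=\tfrac14 be,\ \{b,f\}=\tfrac14 bf,\ \{b,h\}=-\tfrac14 bh,$ $\{c,d\}=-\tfrac14 cd,\ \{c,e\}=\tfrac14 ce,\ \{c,f\}=0,\ \{c,h\}=\tfrac14 ch,$ $\{d,e\}=-\tfrac14 de,\ \{d,f\}=\tfrac14 df,\ \{d,h\}=\tfrac14 dh,$ $\{e,f\}=-\tfrac14 ef,\ \{e,h\}=0,\ \{f,h\}=\tfrac14 fh$. Then $bdeh$ and $G_1$ are Casimir elements, and the symplectic leaves are $6$-dimensional.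
   Context: A log-canonical bracket is extended from the generators to all Laurent polynomials by bilinearity, antisymmetry and the Leibniz rule. (These variables are the $\lambda$-lengths of a complete system of arcs on a Riemann sphere with two holes, one without cusps and one with four bordered cusps — the $PIV$ case.) *)

From HB Require Import structures.
From mathcomp Require Import all_boot all_order all_algebra.
From mathcomp Require Import finmap.
From mathcomp Require Import monalg.
Set Implicit Arguments. Unset Strict Implicit. Unset Printing Implicit Defensive.
Import Order.TTheory GRing.Theory Num.Theory.
Local Open Scope ring_scope.

Section PIV.
Variable R : numFieldType.

(* Variables a,b,c,d,e,f,h are indexed 0,...,6 (in this order). *)
Definition expo := 'rV[int]_7.

(* Laurent polynomials in a..h with coefficients in R[G1] (polynomials in
   the central parameter G1). *)
Definition Laurent := {malg {poly R}[expo]}.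

(* The matrix of log-canonical coefficients omega: {x_i, x_j} = omega i j x_i x_j,
   given for i < j, extended antisymmetrically. *)
Definition omega_up (i j : nat) : R :=
  match i, j with
  | 0, 1 => 0        | 0, 2 => - (1/2)  | 0, 3 => - (1/2)
  | 0, 4 => 0        | 0, 5 => 1/2      | 0, 6 => 1/2
  | 1, 2 => 1/4      | 1, 3 => 0        | 1, 4 => 1/4
  | 1, 5 => 1/4      | 1, 6 => - (1/4)
  | 2, 3 => - (1/4)  | 2, 4 => 1/4      | 2, 5 => 0      | 2, 6 => 1/4
  | 3, 4 => - (1/4)  | 3, 5 => 1/4      | 3, 6 => 1/4
  | 4, 5 => - (1/4)  | 4, 6 => 0
  | 5, 6 => 1/4
  | _, _ => 0
  end.

Definition omega : 'M[R]_7 :=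
  \matrix_(i, j) (if (i < j)%N then omega_up i j
                  else if (j < i)%N then - omega_up j i else 0).

(* Bilinear pairing of exponent vectors: {x^al, x^be} = (al^T omega be) x^(al+be). *)
Definition pairing (al be : expo) : R :=
  \sum_(i < 7) \sum_(j < 7) (al 0 i)%:~R * omega i j * (be 0 j)%:~R.

(* The log-canonical bracket, extended from the generators to all Laurent
   polynomials by bilinearity, antisymmetry and the Leibniz rule
   (coefficients in R[G1] are central). *)
Definition bracket (F H : Laurent) : Laurent :=
  \sum_(al <- msupp F) \sum_(be <- msupp H)
     << (F@_al * H@_be * (pairing al be)%:P) *g (al + be) >>.

Definition var (i : 'I_7) : Laurent := << (delta_mx 0 i : expo) >>.
Definition va := var (@Ordinal 7 0 isT).
Definition vb := var (@Ordinal 7 1 isT).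
Definition vc := var (@Ordinal 7 2 isT).
Definition vd := var (@Ordinal 7 3 isT).
Definition ve := var (@Ordinal 7 4 isT).
Definition vf := var (@Ordinal 7 5 isT).
Definition vh := var (@Ordinal 7 6 isT).

Definition G1 : Laurent := << ('X : {poly R}) *g (0 : expo) >>.

Definition bdeh : Laurent :=
  << (delta_mx 0 (@Ordinal 7 1 isT) + delta_mx 0 (@Ordinal 7 3 isT)
      + delta_mx 0 (@Ordinal 7 4 isT) + delta_mx 0 (@Ordinal 7 6 isT) : expo) >>.

Definition casimir (C : Laurent) : Prop := forall F : Laurent, bracket C F = 0.

(* Evaluation of a Laurent polynomial at a point (g, x) with g the value of G1
   and x in the torus (all coordinates nonzero). *)
Definition evalL (g : R) (x : 'I_7 -> R) (F : Laurent) : R :=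
  \sum_(al <- msupp F) (F@_al).[g] * \prod_(i < 7) x i ^ (al 0 i).

(* Coordinate functions on the 8-dimensional space (a,b,c,d,e,f,h,G1). *)
Definition coord (k : 'I_8) : Laurent :=
  match split (k : 'I_(7 + 1)) with
  | inl i => var i
  | inr _ => G1
  end.

Definition poisson_tensor (g : R) (x : 'I_7 -> R) : 'M[R]_8 :=
  \matrix_(k, l) evalL g x (bracket (coord k) (coord l)).

End PIV.

(* The bracket of two Laurent monomials is the monomial of the summed
   exponent, scaled by the pairing al omega be^T.  Hence a monomial whose
   exponent lies in the left kernel of omega is a Casimir: this covers G1
   (exponent 0) and bdeh.  On the torus the Poisson tensor is D Omega D with
   D = diag(a, ..., h, 1) invertible and Omega = omega bordered by a zero row
   and column for G1, so its rank is that of omega: at most 6 because the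
   exponent of bdeh is a nonzero kernel vector, and at least 6 because the
   leading 6 x 6 minor of omega is invertible. *)

From Pilot Require Import Defs.
From HB Require Import structures.
From mathcomp Require Import all_boot all_order all_algebra.
From mathcomp Require Import finmap monalg ring.
Set Implicit Arguments. Unset Strict Implicit. Unset Printing Implicit Defensive.
Import Order.TTheory GRing.Theory Num.Theory.
Local Open Scope ring_scope.

Section RankLemmas.
Variable F : fieldType.

Lemma mxrank_mxsub m n m' n' (f : 'I_m' -> 'I_m) (g : 'I_n' -> 'I_n)
    (A : 'M[F]_(m, n)) :
  (\rank (mxsub f g A) <= \rank A)%N.
Proof.
rewrite -{1}[A]mul1mx -{1}[A]mulmx1 mxsub_mul -mulmx_colsub mulmxA.
exact: leq_trans (mxrankM_maxl _ _) (mxrankM_maxr _ _).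
Qed.

Lemma mxrank_mul_unit m n (P : 'M[F]_m) (A : 'M[F]_(m, n)) (Q : 'M[F]_n) :
  P \in unitmx -> Q \in unitmx -> \rank (P *m A *m Q) = \rank A.
Proof.
move=> Pu Qu; rewrite mxrankMfree ?row_free_unit //.
by rewrite -mxrank_tr trmx_mul mxrankMfree ?row_free_unit ?unitmx_tr // mxrank_tr.
Qed.

Lemma mxrank_lt_left_kernel n (A : 'M[F]_n) (v : 'rV[F]_n) :
  v != 0 -> v *m A = 0 -> (\rank A < n)%N.
Proof.
move=> v_neq0 /sub_kermxP v_ker.
have := mxrankS v_ker; rewrite rank_rV v_neq0 mxrank_ker.
by rewrite subn_gt0.
Qed.

End RankLemmas.

Section PIV.
Variable R : numFieldType.

Local Notation Laurent := (Laurent R).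
Local Notation omega := (omega R).
Local Notation pairing := (pairing R).

Lemma big_msuppU (T : nmodType) (c : {poly R}) (k : expo) (Fn : expo -> T) :
  Fn k = 0 \/ c != 0 ->
  \sum_(al <- msupp (<< c *g k >> : Laurent)) Fn al = Fn k.
Proof.
move=> Fk_or_c; rewrite msuppU; case: eqP => [c0|_]; last exact: big_seq_fset1.
by rewrite big_nil; case: Fk_or_c => [//|]; rewrite c0 eqxx.
Qed.

Lemma bracketU (c1 c2 : {poly R}) (k1 k2 : expo) :
  bracket (<< c1 *g k1 >>) (<< c2 *g k2 >>) =
  << (c1 * c2 * (pairing k1 k2)%:P) *g (k1 + k2) >>.
Proof.
rewrite /bracket; have [->|c1_neq0] := eqVneq c1 0.
  by rewrite monalgU0 msupp0 big_nil !mul0r monalgU0.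
rewrite big_msuppU; last by right.
have [->|c2_neq0] := eqVneq c2 0.
  by rewrite monalgU0 msupp0 big_nil !mulr0 mul0r monalgU0.
by rewrite big_msuppU ?mcoeffUU //; right.
Qed.

Lemma evalLU g x (c : {poly R}) (k : expo) :
  evalL g x (<< c *g k >>) = c.[g] * \prod_(i < 7) x i ^ (k 0 i).
Proof.
rewrite /evalL big_msuppU ?mcoeffUU //.
by have [->|] := eqVneq c 0; [left; rewrite hornerC mul0r | right].
Qed.

Lemma evalL0 g x : evalL g x (0 : Laurent) = 0.
Proof. by rewrite /evalL msupp0 big_nil. Qed.

Definition expo_row (al : expo) : 'rV[R]_7 := map_mx (fun z : int => z%:~R) al.

Lemma pairing_eq0l (al be : expo) :
  expo_row al *m omega = 0 -> pairing al be = 0.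
Proof.
move=> al_ker; rewrite /pairing exchange_big big1 // => j _.
have := congr1 (fun M : 'rV_7 => M 0 j) al_ker; rewrite !mxE => al_ker_j.
rewrite (eq_bigr (fun i => (al 0 i)%:~R * omega i j)) in al_ker_j;
  last by move=> i _; rewrite mxE.
by rewrite -mulr_suml al_ker_j mul0r.
Qed.

Lemma casimirU (c : {poly R}) (al : expo) :
  expo_row al *m omega = 0 -> casimir (<< c *g al >>).
Proof.
move=> al_ker F; have pairing_eq0 be : pairing al be = 0 by exact: pairing_eq0l.
rewrite /bracket big_msuppU; last left.
all: by rewrite big1 // => be _; rewrite pairing_eq0 mulr0 monalgU0.
Qed.

Lemma casimir_G1 : casimir (G1 R).
Proof. by apply: casimirU; rewrite /expo_row map_mx0 mul0mx. Qed.

Definition bdeh_expo : expo :=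
  delta_mx 0 (@Ordinal 7 1 isT) + delta_mx 0 (@Ordinal 7 3 isT)
  + delta_mx 0 (@Ordinal 7 4 isT) + delta_mx 0 (@Ordinal 7 6 isT).

Lemma bdeh_expo_ker : expo_row bdeh_expo *m omega = 0.
Proof.
apply/rowP => -[j lt_j7]; rewrite !mxE.
do 7 rewrite big_ord_recl; rewrite big_ord0 !mxE /omega_up /=.
case: j lt_j7 => [|[|[|[|[|[|[|j]]]]]]] //= _.
all: by field.
Qed.

Lemma bdeh_expo_neq0 : expo_row bdeh_expo != 0.
Proof.
by apply/negP => /eqP/rowP/(_ (@Ordinal 7 1 isT))/eqP; rewrite !mxE /= oner_eq0.
Qed.

Lemma casimir_bdeh : casimir (bdeh R).
Proof. exact: casimirU bdeh_expo_ker. Qed.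

Definition omega_minor : 'M[R]_6 :=
  mxsub (widen_ord (leqnSn 6)) (widen_ord (leqnSn 6)) omega.

Definition omega_minor_inv : 'M[R]_6 :=
  \matrix_(i, j) nth 0 (nth [::] [:: [:: 0; 0; 1; 0; 0; -1];
                                     [:: 0; 0; 0; -2; -2; -2];
                                     [:: -1; 0; 0; 1; -1; 1];
                                     [:: 0; 2; -1; 0; 2; -1];
                                     [:: 0; 2; 1; -2; 0; -1];
                                     [:: 1; 2; -1; 1; 1; 0]] i) j.

Lemma omega_minorK : omega_minor *m omega_minor_inv = 1%:M.
Proof.
apply/matrixP => -[[|[|[|[|[|[|i]]]]]] lt_i6] -[[|[|[|[|[|[|j]]]]]] lt_j6] //.
all: rewrite !mxE; do 6 rewrite big_ord_recl; rewrite big_ord0 !mxE /omega_up /=.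
all: by field.
Qed.

Lemma rank_omega : \rank omega = 6%N.
Proof.
apply/eqP; rewrite eqn_leq -ltnS (mxrank_lt_left_kernel bdeh_expo_neq0 bdeh_expo_ker).
have [minor_unit _] := mulmx1_unit omega_minorK.
by rewrite -{1}(mxrank_unit minor_unit) mxrank_mxsub.
Qed.

Lemma prod_expo_delta (x : 'I_7 -> R) (i : 'I_7) :
  \prod_(t < 7) x t ^ ((delta_mx 0 i : expo) 0 t) = x i.
Proof.
rewrite (bigD1 i) //= big1 => [|t /negPf t_neq_i]; last by rewrite !mxE t_neq_i expr0z.
by rewrite !mxE !eqxx expr1z mulr1.
Qed.

Lemma pairing0r (al : expo) : pairing al 0 = 0.
Proof. by apply: big1 => i _; apply: big1 => j _; rewrite !mxE mulr0z mulr0. Qed.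

Lemma pairing_delta (i j : 'I_7) :
  pairing (delta_mx 0 i) (delta_mx 0 j) = omega i j.
Proof.
rewrite /pairing (bigD1 i) //= [X in _ + X]big1 => [|i' /negPf i'_neq_i]; last first.
  by apply: big1 => j' _; rewrite !mxE i'_neq_i mul0r mul0r.
rewrite addr0 (bigD1 j) //= [X in _ + X]big1 => [|j' /negPf j'_neq_j]; last first.
  by rewrite !mxE j'_neq_j mulr0z mulr0.
by rewrite !mxE !eqxx mul1r mulr1 addr0.
Qed.

Lemma evalL_bracket_var g (x : 'I_7 -> R) (i j : 'I_7) : (forall t, x t != 0) ->
  evalL g x (bracket (var R i) (var R j)) = x i * omega i j * x j.
Proof.
move=> x_neq0; rewrite bracketU evalLU pairing_delta !mul1r hornerC mulrC.
rewrite -(prod_expo_delta x i) -(prod_expo_delta x j) mulrAC -big_split /=.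
by congr (_ * _); apply: eq_bigr => t _; rewrite [in LHS]mxE expfzDr.
Qed.

Lemma bracket_var_G1 (i : 'I_7) : bracket (var R i) (G1 R) = 0.
Proof. by rewrite bracketU pairing0r mulr0 monalgU0. Qed.

Definition omega_ext : 'M[R]_(7 + 1) := block_mx omega 0 0 0.

Lemma rank_omega_ext : \rank omega_ext = 6%N.
Proof. by rewrite rank_diag_block_mx mxrank0 rank_omega. Qed.

Definition torus_scaling (x : 'I_7 -> R) : 'rV[R]_(7 + 1) := row_mx (\row_i x i) 1.

Lemma torus_scaling_unit (x : 'I_7 -> R) : (forall i, x i != 0) ->
  diag_mx (torus_scaling x) \in unitmx.
Proof.
move=> x_neq0; rewrite unitmxE det_diag unitfE; apply/prodf_neq0 => k _.
rewrite -[k]splitK /torus_scaling.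
by case: split => i /=; rewrite ?row_mxEl ?row_mxEr ?ord1 !mxE ?eqxx ?oner_eq0.
Qed.

Lemma poisson_tensorE g (x : 'I_7 -> R) : (forall i, x i != 0) ->
  poisson_tensor g x =
  diag_mx (torus_scaling x) *m omega_ext *m diag_mx (torus_scaling x).
Proof.
move=> x_neq0; apply/matrixP => k l; rewrite mul_mx_diag mul_diag_mx !mxE.
rewrite -(@splitK 7 1 k) -(@splitK 7 1 l) /Defs.coord !unsplitK.
case: (@split 7 1 k) => i; case: (@split 7 1 l) => j /=.
- by rewrite row_mxEl evalL_bracket_var // !mxE.
- by rewrite row_mxEr bracket_var_G1 evalL0 !mxE mulr0 mul0r.
- by rewrite casimir_G1 evalL0 row_mxEl !mxE mulr0 mul0r.
- by rewrite casimir_G1 evalL0 row_mxEr !mxE mulr0 mul0r.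
Qed.

Lemma rank_poisson_tensor g (x : 'I_7 -> R) : (forall i, x i != 0) ->
  \rank (poisson_tensor g x) = 6%N.
Proof.
move=> x_neq0; have D_unit := torus_scaling_unit x_neq0.
by rewrite poisson_tensorE // mxrank_mul_unit // rank_omega_ext.
Qed.

End PIV.

Theorem mainTheorem3 (R : numFieldType) :
  casimir (bdeh R) /\ casimir (G1 R) /\
  (forall (g : R) (x : 'I_7 -> R), (forall i, x i != 0) ->
     \rank (poisson_tensor g x) = 6%N).
Proof.
split; first exact: casimir_bdeh.
split; first exact: casimir_G1.
exact: rank_poisson_tensor.
Qed.
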